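(* Let $D=\mathrm{diag}(1,-1,1,-1,\ldots)=(1,-x)$, $\mathbb{F}^{\rm S}=(1,x(1+x))$, $\mathbb{L}^{\rm S}=(1+2x,x(1+x))$, and write $D(\mathbb{F}^{\rm S})^{-1}D=[r_{ij}]_{i,j\ge0}$ and $D(\mathbb{L}^{\rm S})^{-1}D=[q_{ij}]_{i,j\ge0}$. Then for all positive integers $i,j$ with $i\ge j$: (a) $r_{i,i-j+1}=r_{i-1,i-1}+r_{i-1,i-2}+\cdots+r_{i-1,i-j}$; (b) $q_{i,i-j+1}=q_{i-1,i-1}+q_{i-1,i-2}+\cdots+q_{i-1,i-j}$.
   Context: All matrices are infinite with rows and columns indexed by $0,1,2,\ldots$. For formal power series $g(x)=g_0+g_1x+\cdots$ with $g_0\ne0$ and $f(x)=f_1x+f_2x^2+\cdots$ with $f_1\ne0$, $(g(x),f(x))$ denotes the (Riordan) infinite lower triangular matrix whose $j$-th column has generating function $g(x)f(x)^j$. These matrices form a group under matrix multiplication with $(g,f)(h,l)=(g\cdot h(f),l(f))$. *)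

From mathcomp Require Import all_boot all_order all_algebra.
Set Implicit Arguments. Unset Strict Implicit. Unset Printing Implicit Defensive.
Import GRing.Theory.
Local Open Scope ring_scope.

Definition fps := nat -> int.

Definition fps_mul (a b : fps) : fps :=
  fun n => \sum_(k < n.+1) a k * b (n - k)%N.

Definition fps_one : fps := fun n => (n == 0)%:R.

Definition fps_pow (f : fps) (j : nat) : fps := iter j (fps_mul f) fps_one.

Definition imat := nat -> nat -> int.

Definition riordan (g f : fps) : imat := fun i j => fps_mul g (fps_pow f j) i.

Definition lower_tri (A : imat) : Prop := forall i j, (i < j)%N -> A i j = 0.

(* Product of infinite matrices; the sum over k <= i is the full (finite)
   product whenever the left factor is lower triangular, which is the case
   for every use below. *)
Definition lmul (A B : imat) : imat := fun i j => \sum_(k < i.+1) A i k * B k j.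

Definition imat1 : imat := fun i j => (i == j)%:R.

Definition ps_x_x2 : fps := fun n => ((n == 1)%N || (n == 2)%N)%:R.
Definition ps_1_2x : fps := fun n => if n == 0%N then 1 else if n == 1%N then 2 else 0.
Definition ps_mx : fps := fun n => - (n == 1)%:R.

Definition Dmat : imat := riordan fps_one ps_mx.
Definition FS : imat := riordan fps_one ps_x_x2.
Definition LS : imat := riordan ps_1_2x ps_x_x2.

Definition is_inverse (A R : imat) : Prop :=
  lower_tri R /\ lmul A R = imat1 /\ lmul R A = imat1.

(* Let S = (x, x) be the shift matrix and T_f = (f, x) the Toeplitz matrix of f.
   Since column j+1 of a Riordan matrix M = (g, f) is f times column j, we have
   M S = T_f M, hence M^-1 T_f = S M^-1.  For f = x(1+x) this says
   b(i+1,j+1) + b(i+1,j+2) = b(i,j) for the entries b of M^-1, whatever g is.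
   Conjugation by D multiplies b(i,j) by (-1)^(i+j), turning the rule into
   r(i+1,j+1) = r(i,j) + r(i+1,j+2); unrolling it along row i+1, and stopping
   at r(i+1,i+2) = 0, writes each entry as a sum of entries of row i. *)

From mathcomp Require Import all_boot all_order all_algebra.
From Stdlib Require Import FunctionalExtensionality.
From mathcomp Require Import zify ring.
Import GRing.Theory.
Local Open Scope ring_scope.

Lemma sumr_delta {R : pzSemiRingType} (F : nat -> R) n (m : nat) :
  \sum_(k < n) F k * (k == m :> nat)%:R = if (m < n)%N then F m else 0.
Proof.
rewrite -(@big_ord1_eq R 0 +%R) [RHS]big_mkcond; apply: eq_bigr => k _.
by case: eqP; rewrite ?mulr1 ?mulr0.
Qed.

Lemma sumr_widen {R : nmodType} (F : nat -> R) n1 n2 : (n1 <= n2)%N ->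
  (forall k, (n1 <= k)%N -> F k = 0) -> \sum_(k < n1) F k = \sum_(k < n2) F k.
Proof.
move=> le_n12 F0; rewrite (big_ord_widen _ F le_n12) big_mkcond.
by apply: eq_bigr => k _; case: ltnP => // /F0 ->.
Qed.

Section LowerTriangular.

Implicit Types A B C M S T : imat.

Lemma lower_tri_lmul A B : lower_tri B -> lower_tri (lmul A B).
Proof.
move=> LB i j lt_ij; rewrite /lmul big1 // => k _.
by rewrite LB ?mulr0 // (leq_ltn_trans (leq_ord k)).
Qed.

Lemma lmul1m A : lmul imat1 A = A.
Proof.
apply: functional_extensionality => i; apply: functional_extensionality => j.
rewrite /lmul /imat1; under eq_bigr => k _ do rewrite mulrC eq_sym.
by rewrite (sumr_delta (fun k => A k j)) ltnSn.
Qed.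

Lemma lmulm1 A : lower_tri A -> lmul A imat1 = A.
Proof.
move=> LA; apply: functional_extensionality => i; apply: functional_extensionality => j.
by rewrite /lmul /imat1 (sumr_delta (A i)); case: ltnP => // /LA.
Qed.

Lemma lmulA A B C : lower_tri B -> lmul A (lmul B C) = lmul (lmul A B) C.
Proof.
move=> LB; apply: functional_extensionality => i; apply: functional_extensionality => j.
rewrite /lmul.
transitivity (\sum_(k < i.+1) \sum_(l < i.+1) A i k * (B k l * C l j)).
  apply: eq_bigr => k _; rewrite mulr_sumr.
  apply: (sumr_widen (fun l => A i k * (B k l * C l j))) => // l lt_kl.
  by rewrite LB ?mul0r ?mulr0.
rewrite exchange_big; apply: eq_bigr => l _; rewrite mulr_suml.
by apply: eq_bigr => k _; rewrite mulrA.
Qed.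

(* From M S = T M: B T = B T (M B) = B (T M) B = B (M S) B = S B. *)
Lemma lmul_inverse_intertwine M B S T :
  is_inverse M B -> lower_tri M -> lower_tri T ->
  lmul M S = lmul T M -> lmul B T = lmul S B.
Proof.
move=> [LB [MB BM]] LM LT MS_TM.
rewrite -(lmulm1 _ (lower_tri_lmul B T LT)) -MB lmulA // -(lmulA B T M LT) -MS_TM.
by rewrite lmulA // BM lmul1m.
Qed.

End LowerTriangular.

Section PowerSeries.

Implicit Types a b c g f : fps.

Definition fps_trunc a n : {poly int} := \poly_(k < n.+1) a k.

Lemma coef_fps_trunc a n k : (k <= n)%N -> (fps_trunc a n)`_k = a k.
Proof. by rewrite coef_poly ltnS => ->. Qed.

Lemma fps_mul_coefM (p q : {poly int}) a b n :
  (forall k, (k <= n)%N -> p`_k = a k) -> (forall k, (k <= n)%N -> q`_k = b k) ->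
  fps_mul a b n = (p * q)`_n.
Proof.
move=> pa qb; rewrite coefM; apply: eq_bigr => k _.
by rewrite pa ?qb ?leq_subr // -ltnS.
Qed.

(* Coefficients up to n of a Cauchy product only involve coefficients up to n,
   so the ring laws of fps_mul are inherited from {poly int}. *)
Lemma fps_mul_trunc a b n : fps_mul a b n = (fps_trunc a n * fps_trunc b n)`_n.
Proof. by apply: fps_mul_coefM => k; apply: coef_fps_trunc. Qed.

Lemma fps_mulC a b : fps_mul a b = fps_mul b a.
Proof. by apply: functional_extensionality => n; rewrite !fps_mul_trunc mulrC. Qed.

Lemma fps_mulA a b c : fps_mul a (fps_mul b c) = fps_mul (fps_mul a b) c.
Proof.
apply: functional_extensionality => n; set P := fps_trunc ^~ n.
have truncM x y k : (k <= n)%N -> (P x * P y)`_k = fps_mul x y k.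
  move=> le_kn; symmetry; apply: fps_mul_coefM => l le_lk;
  by rewrite coef_fps_trunc // (leq_trans le_lk).
rewrite (fps_mul_coefM (P a) (P b * P c)) ?(fps_mul_coefM (P a * P b) (P c))
  ?mulrA // => k le_kn; by rewrite ?truncM ?coef_fps_trunc.
Qed.

Lemma fps_mul1 a : fps_mul fps_one a = a.
Proof.
apply: functional_extensionality => n; rewrite /fps_mul /fps_one.
under eq_bigr => k _ do rewrite mulrC.
by rewrite (sumr_delta (fun k => a (n - k)%N)) subn0.
Qed.

Lemma riordan_col0 g f i : riordan g f i 0 = g i.
Proof. by rewrite /riordan /= fps_mulC fps_mul1. Qed.

Lemma riordan_succ_col g f i j :
  riordan g f i j.+1 = \sum_(k < i.+1) riordan g f k j * f (i - k)%N.
Proof. by rewrite /riordan /= [fps_mul f _]fps_mulC fps_mulA. Qed.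

Lemma lower_tri_riordan g f : f 0%N = 0 -> lower_tri (riordan g f).
Proof.
move=> f0 i j; elim: j i => [|j IHj] i lt_ij; first by rewrite ltn0 in lt_ij.
rewrite riordan_succ_col big1 // => k _.
have le_ki : (k <= i)%N := leq_ord k.
case: (ltnP k j) => [/IHj -> | le_jk]; first by rewrite mul0r.
have -> : (i - k = 0)%N by lia.
by rewrite f0 mulr0.
Qed.

End PowerSeries.

Definition toeplitz (f : fps) : imat := fun i k => if (k <= i)%N then f (i - k)%N else 0.

Definition fps_x : fps := fun n => (n == 1)%:R.

Lemma lower_tri_toeplitz f : lower_tri (toeplitz f).
Proof. by move=> i k lt_ik; rewrite /toeplitz leqNgt lt_ik. Qed.

Lemma toeplitz_x k j : toeplitz fps_x k j = imat1 k j.+1.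
Proof.
rewrite /toeplitz /fps_x /imat1; case: leqP => [le_jk | lt_kj].
  by congr (_%:R); apply/eqP/eqP; lia.
by rewrite ltn_eqF //; lia.
Qed.

Lemma toeplitz_x_x2 k j : toeplitz ps_x_x2 k j = imat1 k j.+1 + imat1 k j.+2.
Proof.
rewrite /toeplitz /ps_x_x2 /imat1; case: leqP => [le_jk | lt_kj].
  by do 2 case: eqP => ?; do 2 case: eqP => ?; rewrite ?addr0 ?add0r //; lia.
by rewrite !ltn_eqF ?addr0 //; lia.
Qed.

Lemma lmul_toeplitz_x A i j : lower_tri A -> lmul A (toeplitz fps_x) i j = A i j.+1.
Proof.
move=> LA; transitivity (lmul A imat1 i j.+1); last by rewrite lmulm1.
by apply: eq_bigr => k _; rewrite toeplitz_x.
Qed.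

Lemma toeplitz_x_lmul A i j : lmul (toeplitz fps_x) A i.+1 j = A i j.
Proof.
rewrite /lmul; under eq_bigr => k _ do rewrite toeplitz_x /imat1 eqSS eq_sym mulrC.
by rewrite (sumr_delta (fun k => A k j)) ltnW.
Qed.

Lemma lmul_toeplitz_x_x2 A i j :
  lower_tri A -> lmul A (toeplitz ps_x_x2) i j = A i j.+1 + A i j.+2.
Proof.
move=> LA; transitivity (lmul A imat1 i j.+1 + lmul A imat1 i j.+2); last first.
  by rewrite lmulm1.
by rewrite /lmul -big_split; apply: eq_bigr => k _; rewrite toeplitz_x_x2 mulrDr.
Qed.

Lemma riordan_lmul_toeplitz_x g f : f 0%N = 0 ->
  lmul (riordan g f) (toeplitz fps_x) = lmul (toeplitz f) (riordan g f).
Proof.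
move=> f0; apply: functional_extensionality => i; apply: functional_extensionality => j.
rewrite lmul_toeplitz_x; last exact: lower_tri_riordan.
rewrite riordan_succ_col.
by apply: eq_bigr => k _; rewrite /toeplitz leq_ord mulrC.
Qed.

Lemma DmatE k j : Dmat k j = (-1) ^+ j * imat1 k j.
Proof.
elim: j k => [|j IHj] k; first by rewrite /Dmat riordan_col0 mul1r.
rewrite /Dmat riordan_succ_col -/Dmat.
under eq_bigr => l _ do rewrite IHj /imat1 mulrAC.
rewrite (sumr_delta (fun l => (-1) ^+ j * ps_mx (k - l)%N)) /ps_mx /imat1.
case: ltnP => [le_jk | lt_kj]; last by rewrite ltn_eqF ?mulr0 //; lia.
have -> : (k - j == 1)%N = (k == j.+1) by apply/eqP/eqP; lia.
by rewrite exprS mulN1r mulrN mulNr.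
Qed.

Lemma Dmat_lmul A i j : lmul Dmat A i j = (-1) ^+ i * A i j.
Proof.
rewrite /lmul; under eq_bigr => k _ do rewrite DmatE /imat1 mulrAC eq_sym.
by rewrite (sumr_delta (fun k => (-1) ^+ k * A k j)) ltnSn.
Qed.

Lemma lmul_Dmat A i j : lower_tri A -> lmul A Dmat i j = (-1) ^+ j * A i j.
Proof.
move=> LA; rewrite -[in RHS](lmulm1 _ LA) /lmul mulr_sumr.
by apply: eq_bigr => k _; rewrite DmatE mulrCA.
Qed.

Lemma Dmat_conj B i j : lower_tri B ->
  lmul Dmat (lmul B Dmat) i j = (-1) ^+ (i + j) * B i j.
Proof. by move=> LB; rewrite Dmat_lmul lmul_Dmat // mulrA -exprD. Qed.

Lemma riordan_inverse_intertwine g f B : is_inverse (riordan g f) B -> f 0%N = 0 ->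
  lmul B (toeplitz f) = lmul (toeplitz fps_x) B.
Proof.
move=> invB f0; apply: (lmul_inverse_intertwine _ _ _ _ invB).
- exact: lower_tri_riordan.
- exact: lower_tri_toeplitz.
- exact: riordan_lmul_toeplitz_x.
Qed.

Lemma inverse_x_x2_recurrence g B i m : is_inverse (riordan g ps_x_x2) B ->
  B i.+1 m.+1 + B i.+1 m.+2 = B i m.
Proof.
move=> invB; have [LB _] := invB.
by rewrite -(lmul_toeplitz_x_x2 _ _ _ LB) (riordan_inverse_intertwine _ _ _ invB) //
  toeplitz_x_lmul.
Qed.

Lemma lower_tri_telescope (r : imat) : lower_tri r ->
  (forall i m, r i.+1 m.+1 = r i m + r i.+1 m.+2) ->
  forall n j, (j <= n)%N -> r n.+1 (n.+1 - j)%N = \sum_(k < j.+1) r n (n - k)%N.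
Proof.
move=> Lr rec n; elim=> [_ | j IHj lt_jn].
  by rewrite subn0 big_ord1 subn0 rec [r n.+1 n.+2]Lr ?addr0.
rewrite big_ord_recr /= -IHj ?(ltnW lt_jn) // addrC.
have -> : (n.+1 - j.+1 = (n - j.+1).+1)%N by lia.
have -> : (n.+1 - j = (n - j.+1).+2)%N by lia.
exact: rec.
Qed.

Lemma conj_inverse_x_x2_row_sum g B : is_inverse (riordan g ps_x_x2) B ->
  forall i j, (0 < j)%N -> (j <= i)%N ->
  let r := lmul Dmat (lmul B Dmat) in
  r i (i - j + 1)%N = \sum_(1 <= k < j.+1) r i.-1 (i - k)%N.
Proof.
move=> invB [|n] [|j] // _ le_jn r; have [LB _] := invB.
have Lr : lower_tri r by move=> i m lt_im; rewrite /r Dmat_conj // LB ?mulr0.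
have rec i m : r i.+1 m.+1 = r i m + r i.+1 m.+2.
  rewrite /r !Dmat_conj // -(inverse_x_x2_recurrence _ _ i m invB) !addSn !addnS !exprS.
  ring.
have -> : (n.+1 - j.+1 + 1 = n.+1 - j)%N by lia.
by rewrite big_add1 big_mkord lower_tri_telescope.
Qed.

Theorem corollary3p3 (Finv Linv : imat) :
  is_inverse FS Finv -> is_inverse LS Linv ->
  forall i j : nat, (0 < j)%N -> (j <= i)%N ->
    let r := lmul Dmat (lmul Finv Dmat) in
    let q := lmul Dmat (lmul Linv Dmat) in
    r i (i - j + 1)%N = \sum_(1 <= k < j.+1) r (i.-1) (i - k)%N /\
    q i (i - j + 1)%N = \sum_(1 <= k < j.+1) q (i.-1) (i - k)%N.
Proof.
move=> invF invL i j j_gt0 le_ji r q; split.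
- exact: (conj_inverse_x_x2_row_sum _ _ invF).
- exact: (conj_inverse_x_x2_row_sum _ _ invL).
Qed.
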